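(* Let $2\le s\le r$ be integers with $r>2$. For every graph $\Gamma$, we have $$\mathrm{ex}(\Gamma,\mathcal{P}_{K_{s,r}})\ \ge\ \frac{1}{2}\,e(\Gamma)\,\mathrm{ex}(\chi(\overline{\Gamma}),K_{s,r})\Big/\binom{\chi(\overline{\Gamma})}{2}.$$
   Context: For a graph $H$, $\mathcal{P}_H$ is the hereditary property of not containing $H$ as an induced subgraph. For a property $\mathcal{P}$ and a graph $\Gamma$, $\mathrm{ex}(\Gamma,\mathcal{P})$ is the maximum number of edges of a subgraph $G\subseteq\Gamma$ that belongs to $\mathcal{P}$. $\mathrm{ex}(k,K_{s,r})$ is the maximum number of edges of a $k$-vertex graph not containing $K_{s,r}$ as a (not necessarily induced) subgraph. $\overline{\Gamma}$ is the complement of $\Gamma$ and $\chi$ denotes chromatic number. *)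

From mathcomp Require Import all_boot all_order all_algebra.
Set Implicit Arguments. Unset Strict Implicit. Unset Printing Implicit Defensive.

Definition simple_graph (T : finType) (e : rel T) : Prop :=
  symmetric e /\ irreflexive e.

Definition simple_graphb (T : finType) (e : rel T) : bool :=
  [forall x, forall y, e x y == e y x] && [forall x, ~~ e x x].

Definition nedges (T : finType) (e : rel T) : nat :=
  #|[set A : {set T} | [exists x, exists y, (A == [set x; y]) && e x y]]|.

Definition compl_graph (T : finType) (e : rel T) : rel T :=
  fun x y => (x != y) && ~~ e x y.

Definition colorable (T : finType) (e : rel T) (k : nat) : bool :=
  [exists c : {ffun T -> 'I_k}, [forall x, forall y, e x y ==> (c x != c y)]].

(* least k <= #|T| admitting a proper k-colouring (always exists for loopless e) *)
Definition chromatic (T : finType) (e : rel T) : nat :=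
  \big[minn/#|T|]_(k < #|T|.+1 | colorable e k) k.

Definition Kbip (s r : nat) : rel ('I_s + 'I_r)%type :=
  fun x y => match x, y with
             | inl _, inr _ | inr _, inl _ => true
             | _, _ => false
             end.
Arguments Kbip : clear implicits.

Definition contains_sub (V T : finType) (h : rel V) (g : rel T) : bool :=
  [exists f : {ffun V -> T}, injectiveb f &&
     [forall u, forall v, h u v ==> g (f u) (f v)]].

Definition contains_induced (V T : finType) (h : rel V) (g : rel T) : bool :=
  [exists f : {ffun V -> T}, injectiveb f &&
     [forall u, forall v, g (f u) (f v) == h u v]].

Definition frel (T : finType) (g : {ffun T * T -> bool}) : rel T :=
  fun x y => g (x, y).

(* ex(Gamma, P_H): max number of edges of a subgraph G of Gamma
   (same vertex set) with no induced copy of H. *)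
Definition ex_ind (V T : finType) (h : rel V) (e : rel T) : nat :=
  \max_(g : {ffun T * T -> bool} |
          [&& simple_graphb (frel g), [forall x, forall y, frel g x y ==> e x y]
              & ~~ contains_induced h (frel g)]) nedges (frel g).

Definition ex_num (V : finType) (k : nat) (h : rel V) : nat :=
  \max_(g : {ffun 'I_k * 'I_k -> bool} |
          simple_graphb (frel g) && ~~ contains_sub h (frel g))
     nedges (frel g).

From Pilot Require Import Defs.
From mathcomp Require Import all_boot all_order all_algebra all_fingroup.
From mathcomp Require Import zify.
From mathcomp.algebra_tactics Require Import lra.

(* Colour the complement of Gamma with k colours, so that every colour class is
   a clique of Gamma.  Take an extremal K_{s,r}-free graph H on the k colours
   and a bipartite subgraph H' of H with at least half of its edges (a random
   cut).  Keep an edge xy of Gamma when x and y have the same colour or when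
   their colours, relabelled by a permutation pi, are adjacent in H'.  For a
   uniformly random pi an edge between two colour classes survives with
   probability e(H')/binom(k,2), so some pi keeps at least
   e(Gamma) e(H')/binom(k,2) edges.  The graph obtained has no induced K_{s,r}:
   two vertices on the same side of an induced copy have distinct colours, and
   a vertex of the s-side sharing its colour with one of the r-side would, as
   H' is bipartite, force two other vertices of the r-side into a common colour
   class (this is where s >= 2 and r >= 3 are used).  So the colouring embeds
   K_{s,r} into H', which is impossible. *)

Set Implicit Arguments. Unset Strict Implicit. Unset Printing Implicit Defensive.

Lemma simple_graphP (T : finType) (e : rel T) :
  reflect (simple_graph e) (simple_graphb e).
Proof.
apply: (iffP andP) => [[/forallP es /forallP ei] | [es ei]]; split.
- by move=> x y; apply/eqP/(forallP (es x)).
- by move=> x; apply/negbTE/ei.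
- by apply/forallP => x; apply/forallP => y; rewrite es.
- by apply/forallP => x; rewrite ei.
Qed.

Lemma eq_nedges (T : finType) (g g' : rel T) : g =2 g' -> nedges g = nedges g'.
Proof.
move=> gg'; apply: eq_card => A; rewrite !inE.
by apply: eq_existsb => x; apply: eq_existsb => y; rewrite gg'.
Qed.

Lemma eq_contains_induced (V T : finType) (hV : rel V) (g g' : rel T) :
  g =2 g' -> contains_induced hV g = contains_induced hV g'.
Proof.
move=> gg'; apply: eq_existsb => f; congr (_ && _).
by apply: eq_forallb => u; apply: eq_forallb => v; rewrite gg'.
Qed.

Lemma contains_sub_subrel (V T : finType) (hV : rel V) (g g' : rel T) :
  subrel g g' -> contains_sub hV g -> contains_sub hV g'.
Proof.
move=> gg' /existsP [f /andP [f_inj /forallP f_hom]]; apply/existsP; exists f.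
rewrite f_inj; apply/forallP => u; apply/forallP => v; apply/implyP => huv.
by apply: gg'; apply: (implyP (forallP (f_hom u) v)).
Qed.

Lemma ex_num_extremal (V : finType) (k : nat) (hV : rel V) :
  0 < ex_num k hV -> exists h : rel 'I_k,
    [/\ simple_graph h, ~~ contains_sub hV h & ex_num k hV = nedges h].
Proof.
pose P (g : {ffun 'I_k * 'I_k -> bool}) :=
  simple_graphb (Defs.frel g) && ~~ contains_sub hV (Defs.frel g).
have [g0 Pg0 _ | noP] := pickP P; last by rewrite /ex_num big_pred0.
have [|g /andP [/simple_graphP sg free] gE] :=
  eq_bigmax_cond (fun g => nedges (Defs.frel g)) (_ : 0 < #|P|).
  by apply/card_gt0P; exists g0.
by exists (Defs.frel g).
Qed.

Lemma leq_ex_ind (V T : finType) (hV : rel V) (e g : rel T) :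
  simple_graph g -> subrel g e -> ~~ contains_induced hV g -> nedges g <= ex_ind hV e.
Proof.
move=> [gs gi] ge free; pose g' := [ffun p : T * T => g p.1 p.2].
have g'E : Defs.frel g' =2 g by move=> x y; rewrite /Defs.frel ffunE.
rewrite (eq_nedges (fun x y => esym (g'E x y))).
apply: (leq_bigmax_cond (F := fun g => nedges (Defs.frel g)) g').
apply/and3P; split.
- by apply/simple_graphP; split => [x y|x]; rewrite !g'E; [apply: gs | apply: gi].
- by apply/forallP => x; apply/forallP => y; apply/implyP; rewrite g'E => /ge.
- by rewrite (eq_contains_induced _ g'E).
Qed.

Lemma colorable_chromatic (T : finType) (g : rel T) :
  irreflexive g -> colorable g (chromatic g).
Proof.
move=> gi; rewrite /chromatic; apply: (big_ind (colorable g)) => //.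
  apply/existsP; exists [ffun x => enum_rank x]; apply/forallP => x; apply/forallP => y.
  apply/implyP => gxy; rewrite !ffunE (inj_eq enum_rank_inj).
  by apply: contraTneq gxy => ->; rewrite gi.
by move=> a b ha hb; rewrite /minn; case: ifP.
Qed.

Lemma compl_colorable_cliques (T : finType) (e : rel T) (k : nat) :
  colorable (compl_graph e) k ->
  exists c : T -> 'I_k, forall x y, x != y -> c x = c y -> e x y.
Proof.
case/existsP => c /forallP cP; exists c => x y xy cxy; apply/negPn/negP => nexy.
by move: (implyP (forallP (cP x) y)); rewrite /compl_graph xy nexy cxy eqxx => /(_ isT).
Qed.

Definition narcs (T : finType) (g : rel T) : nat := \sum_x \sum_y (g x y : nat).

Lemma narcs_subrel (T : finType) (g g' : rel T) : subrel g g' -> narcs g <= narcs g'.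
Proof.
move=> gg'; apply: leq_sum => x _; apply: leq_sum => y _.
by case gxy: (g x y); rewrite ?(gg' _ _ gxy).
Qed.

Lemma narcs_neq (T : finType) : narcs (fun x y : T => x != y) = #|T| * #|T|.-1.
Proof.
rewrite /narcs -sum_nat_const; apply: eq_bigr => x _.
rewrite -(cardC1 x) -sum1_card [RHS]big_mkcond.
by apply: eq_bigr => y _; rewrite inE eq_sym.
Qed.

Lemma narcs_irr_le (T : finType) (g : rel T) :
  irreflexive g -> narcs g <= #|T| * #|T|.-1.
Proof.
move=> gi; rewrite -narcs_neq; apply: narcs_subrel => x y gxy.
by apply: contraTneq gxy => ->; rewrite gi.
Qed.

Lemma narcsE (T : finType) (g : rel T) :
  symmetric g -> irreflexive g -> narcs g = (nedges g).*2.
Proof.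
move=> gs gi; rewrite /narcs pair_big /= -big_mkcondr /= sum1dep_card.
set P := [set p : T * T | g p.1 p.2].
rewrite -sum1_card (partition_big_imset (fun p : T * T => [set p.1; p.2])) /=.
have -> : [set [set p.1; p.2] | p in P] =
   [set A : {set T} | [exists x, exists y, (A == [set x; y]) && g x y]].
  apply/setP => A; rewrite inE; apply/imsetP/existsP.
    case=> [[x y]]; rewrite inE /= => gxy ->.
    by exists x; apply/existsP; exists y; rewrite eqxx.
  by case=> x /existsP [y /andP [/eqP -> gxy]]; exists (x, y); rewrite ?inE.
rewrite /nedges -mul2n mulnC -sum_nat_const; apply: eq_bigr => A.
rewrite inE => /existsP [x /existsP [y /andP [/eqP -> gxy]]].
have xy : x != y by apply: contraTneq gxy => ->; rewrite gi.
rewrite sum1dep_card (_ : [set p | _] = [set (x, y); (y, x)]).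
  by rewrite cards2; case: eqP => // -[E]; rewrite E eqxx in xy.
apply/setP => [[a b]]; rewrite !inE /=; apply/idP/idP.
  case/andP=> gab /eqP E.
  have ha : a \in [set x; y] by rewrite -E set21.
  have hb : b \in [set x; y] by rewrite -E set22.
  move: ha hb gab; rewrite !inE => /orP [] /eqP -> /orP [] /eqP ->;
    by rewrite ?gi ?eqxx ?orbT.
by case/orP => /eqP [-> ->]; rewrite ?gxy ?eqxx //= gs gxy setUC eqxx.
Qed.

Lemma exists_above_average (I : finType) (i0 : I) (F : I -> nat) :
  exists i, \sum_j F j <= #|I| * F i.
Proof.
have [|i _ Fi] := @eq_bigmax_cond I predT F; first by apply/card_gt0P; exists i0.
by exists i; rewrite -Fi -sum_nat_const; apply: leq_sum => j _; apply: leq_bigmax.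
Qed.

Lemma perm_two_transitive (I : finType) (i j i' j' : I) :
  i != j -> i' != j' -> exists t : {perm I}, t i' = i /\ t j' = j.
Proof.
move=> ij ij'; set z := tperm i' i j'.
have zi : z != i by rewrite /z -{2}(tpermL i' i) (inj_eq perm_inj) eq_sym.
exists (tperm i' i * tperm z j)%g; rewrite !permM tpermL; split; last exact: tpermL.
by rewrite tpermD // eq_sym.
Qed.

Lemma sum_perm_pair (I : finType) (f : I -> I -> nat) (i j : I) :
  (forall u, f u u = 0) -> i != j ->
  #|I| * #|I|.-1 * \sum_(p : {perm I}) f (p i) (p j) =
  #|{perm I}| * \sum_u \sum_v f u v.
Proof.
move=> f0 ij.
have sum_pairE i' j' : i' != j' ->
    \sum_(p : {perm I}) f (p i') (p j') = \sum_(p : {perm I}) f (p i) (p j).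
  case/(perm_two_transitive ij) => t [ti tj].
  by rewrite (reindex_inj (mulgI t)); apply: eq_bigr => p _; rewrite !permM ti tj.
rewrite -narcs_neq big_distrl /=.
rewrite (eq_bigr (fun i' => \sum_j' \sum_(p : {perm I}) f (p i') (p j'))).
  rewrite pair_big exchange_big /= -sum_nat_const; apply: eq_bigr => p _.
  rewrite -(pair_big predT predT (fun a b => f (p a) (p b))) /=.
  rewrite [RHS](reindex_inj (@perm_inj _ p)); apply: eq_bigr => u _.
  by rewrite [RHS](reindex_inj (@perm_inj _ p)).
move=> i' _; rewrite big_distrl /=; apply: eq_bigr => j' _.
have [->|ne] := eqVneq i' j'; last by rewrite /= mul1n (sum_pairE _ _ ne).
by rewrite /= mul0n big1 // => p _; rewrite f0.
Qed.

Definition cut_rel (I : finType) (A : {set I}) (h : rel I) : rel I :=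
  fun u v => h u v && ((u \in A) != (v \in A)).

Lemma sum_cut_pair (I : finType) (u v : I) :
  u != v -> (\sum_(A : {set I}) ((u \in A) != (v \in A) : nat)).*2 = #|{set I}|.
Proof.
(* Toggling [u] is an involution exchanging the sets that separate [u] from [v]
   with those that do not. *)
move=> uv; pose flip (A : {set I}) := [set x | (x == u) (+) (x \in A)].
have flipK : involutive flip by move=> A; apply/setP => x; rewrite !inE addbA addbb.
have flip_cut A : ((u \in flip A) != (v \in flip A)) = ~~ ((u \in A) != (v \in A)).
  by rewrite !inE eqxx [v == u]eq_sym (negbTE uv); case: (u \in A); case: (v \in A).
rewrite -addnn {1}(reindex_inj (inv_inj flipK)) -big_split /= -sum1_card.
by apply: eq_bigr => A _; rewrite flip_cut; case: (_ != _).
Qed.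

Lemma exists_cut_half (I : finType) (h : rel I) :
  irreflexive h -> exists A : {set I}, narcs h <= (narcs (cut_rel A h)).*2.
Proof.
move=> hi; have [A hA] := exists_above_average set0 (fun A => narcs (cut_rel A h)).
have sum_cuts : (\sum_B narcs (cut_rel B h)).*2 = #|{set I}| * narcs h.
  rewrite /narcs exchange_big -mul2n big_distrr [RHS]big_distrr; apply: eq_bigr => u _.
  rewrite exchange_big big_distrr [RHS]big_distrr; apply: eq_bigr => v _; rewrite /cut_rel.
  case huv: (h u v) => /=; last by rewrite sum_nat_const !muln0.
  have uv : u != v by apply: contraTneq huv => ->; rewrite hi.
  by rewrite muln1 mul2n (sum_cut_pair uv).
exists A; rewrite -(leq_pmul2l (_ : 0 < #|{set I}|)); last by apply/card_gt0P; exists set0.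
by rewrite -sum_cuts -!mul2n mulnCA leq_mul2l hA orbT.
Qed.

Definition blowup (T I : finType) (e : rel T) (sigma : T -> I) (h : rel I) : rel T :=
  fun x y => e x y && ((sigma x == sigma y) || h (sigma x) (sigma y)).

Section BlowupInducedFree.

Variables (T I : finType) (e : rel T) (sigma : T -> I) (h : rel I) (side : pred I).
Hypothesis fiber_clique : forall x y, x != y -> sigma x = sigma y -> e x y.
Hypothesis h_bipartite : forall u v, h u v -> side u != side v.

Local Notation G := (blowup e sigma h).

Lemma blowup_fiber x y : x != y -> sigma x = sigma y -> G x y.
Proof. by move=> xy sxy; rewrite /blowup fiber_clique // sxy eqxx. Qed.

Lemma blowup_cross x y : G x y -> sigma x != sigma y -> h (sigma x) (sigma y).
Proof. by case/andP=> _ /orP [/eqP ->|//]; rewrite eqxx. Qed.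

Lemma blowup_side x y :
  G x y -> (side (sigma x) == side (sigma y)) = (sigma x == sigma y).
Proof.
move=> Gxy; have [-> | ne] := eqVneq (sigma x) (sigma y); first by rewrite eqxx.
exact/negbTE/h_bipartite/(blowup_cross Gxy).
Qed.

Variables (s r : nat) (f : 'I_s + 'I_r -> T).
Hypothesis f_inj : injective f.
Hypothesis f_induced : forall u v, G (f u) (f v) = Kbip s r u v.

Lemma induced_nonadj_sigma_neq u v :
  u != v -> ~~ Kbip s r u v -> sigma (f u) != sigma (f v).
Proof.
move=> uv; apply: contraNneq => E.
by rewrite -f_induced blowup_fiber // (inj_eq f_inj).
Qed.

Lemma induced_parts_sigma_neq i j :
  1 < s -> 2 < r -> sigma (f (inl i)) != sigma (f (inr j)).
Proof.
move=> hs hr; apply/eqP => E.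
have /card_gt0P [i' i'i] : 0 < #|predC1 i| by rewrite cardC1 card_ord; lia.
have /card_gt1P [j1 [j2 [j1j j2j j12]]] : 1 < #|predC1 j|.
  by rewrite cardC1 card_ord; lia.
rewrite !inE in i'i j1j j2j.
pose sd u := side (sigma (f u)).
have side_eq u v : Kbip s r u v -> (sd u == sd v) = (sigma (f u) == sigma (f v)).
  by move=> K; apply: blowup_side; rewrite f_induced.
have sd_i' : sd (inl i') != sd (inl i).
  rewrite /sd E -/(sd (inr j)) side_eq // -E.
  by apply: induced_nonadj_sigma_neq => //; apply: contraNneq i'i => -[->].
have sd_j0 j0 : j0 != j -> sd (inl i) != sd (inr j0).
  rewrite side_eq // E => j0j.
  by apply: induced_nonadj_sigma_neq => //; apply: contraNneq j0j => -[->].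
have sigma_j0 j0 : j0 != j -> sigma (f (inl i')) = sigma (f (inr j0)).
  move=> /sd_j0 sd_ij0; apply/eqP; rewrite -side_eq //.
  by move: sd_i' sd_ij0; case: (sd (inl i')); case: (sd (inl i)); case: (sd (inr j0)).
have /eqP[] : sigma (f (inr j1)) != sigma (f (inr j2)).
  by apply: induced_nonadj_sigma_neq => //; apply: contraNneq j12 => -[->].
by rewrite -!sigma_j0.
Qed.

Lemma induced_sigma_inj : 1 < s -> 2 < r -> injective (sigma \o f).
Proof.
move=> hs hr u v /eqP E; apply/eqP; apply: contraTT E => /= uv.
case K: (Kbip s r u v); last by rewrite induced_nonadj_sigma_neq ?K.
case: u v K {uv} => [i|j] [i'|j'] //= _; first exact: induced_parts_sigma_neq.
by rewrite eq_sym; apply: induced_parts_sigma_neq.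
Qed.

End BlowupInducedFree.

Lemma blowup_induced_Kbip_free (T I : finType) (e : rel T) (sigma : T -> I)
    (h : rel I) (side : pred I) (s r : nat) :
  1 < s -> 2 < r ->
  (forall x y, x != y -> sigma x = sigma y -> e x y) ->
  (forall u v, h u v -> side u != side v) ->
  ~~ contains_sub (Kbip s r) h -> ~~ contains_induced (Kbip s r) (blowup e sigma h).
Proof.
move=> hs hr clique bip.
apply: contra => /existsP [f /andP [/injectiveP f_inj /forallP f_ind]].
have f_induced u v : blowup e sigma h (f u) (f v) = Kbip s r u v.
  exact/eqP/(forallP (f_ind u) v).
have sf_inj := induced_sigma_inj clique bip f_inj f_induced hs hr.
apply/existsP; exists [ffun u => sigma (f u)]; apply/andP; split.
  by apply/injectiveP => u v; rewrite !ffunE => /sf_inj.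
apply/forallP => u; apply/forallP => v; apply/implyP => K; rewrite !ffunE.
have Guv : blowup e sigma h (f u) (f v) by rewrite f_induced.
apply: (blowup_cross Guv).
by apply: contraTneq K => /sf_inj ->; case: v {Guv}.
Qed.

Lemma blowup_count (T I : finType) (e : rel T) (c : T -> I) (h : rel I) :
  irreflexive h -> exists pi : {perm I},
    narcs h * narcs e <= #|I| * #|I|.-1 * narcs (blowup e (pi \o c) h).
Proof.
move=> hi; pose N := #|{perm I}|; pose P2 := #|I| * #|I|.-1.
have [pi hpi] := exists_above_average 1%g (fun p : {perm I} => narcs (blowup e (p \o c) h)).
exists pi; rewrite -(leq_pmul2l (_ : 0 < N)); last by apply/card_gt0P; exists 1%g.
apply: (@leq_trans (P2 * \sum_(p : {perm I}) narcs (blowup e (p \o c) h))); last first.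
  by rewrite mulnCA leq_mul2l hpi orbT.
have arc_bound x y :
    N * narcs h * e x y <= P2 * \sum_(p : {perm I}) blowup e (p \o c) h x y.
  rewrite /blowup /=; case: (e x y) => /=; last by rewrite muln0.
  have [E|ne] := eqVneq (c x) (c y).
    rewrite (eq_bigr (fun _ => 1)) => [|p _]; last by rewrite E eqxx.
    by rewrite sum_nat_const !muln1 mulnC leq_mul ?narcs_irr_le.
  rewrite (eq_bigr (fun p : {perm I} => (h (p (c x)) (p (c y)) : nat))) => [|p _].
    rewrite muln1 (@sum_perm_pair _ (fun u v => h u v : nat) (c x) (c y)) //.
    by move=> u; rewrite hi.
  by rewrite (inj_eq perm_inj) (negbTE ne).
have -> : \sum_(p : {perm I}) narcs (blowup e (p \o c) h) =
          \sum_x \sum_y \sum_(p : {perm I}) blowup e (p \o c) h x y.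
  by rewrite /narcs exchange_big; apply: eq_bigr => x _; apply: exchange_big.
rewrite mulnA; set K := N * narcs h.
rewrite [narcs e]/narcs !big_distrr /=; apply: leq_sum => x _.
by rewrite !big_distrr /=; apply: leq_sum => y _; apply: arc_bound.
Qed.

Lemma nedges_mul_ex_num_le (s r k : nat) (T : finType) (e : rel T) :
  1 < s -> 2 < r -> simple_graph e -> colorable (compl_graph e) k ->
  nedges e * ex_num k (Kbip s r) <= 'C(k, 2).*2 * ex_ind (Kbip s r) e.
Proof.
move=> hs hr [es ei] /compl_colorable_cliques [c clique].
have [->|/ex_num_extremal [H [[Hs Hi] Hfree ->]]] := posnP (ex_num k (Kbip s r)).
  by rewrite muln0.
have [A hA] := exists_cut_half Hi.
set hb := cut_rel A H in hA.
have hb_sym : symmetric hb by move=> u v; rewrite /hb /cut_rel Hs eq_sym.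
have hb_irr : irreflexive hb by move=> u; rewrite /hb /cut_rel Hi.
have [pi hpi] := blowup_count e c hb_irr.
set G := blowup e (pi \o c) hb in hpi.
have G_sym : symmetric G by move=> x y; rewrite /G /blowup es eq_sym hb_sym.
have G_irr : irreflexive G by move=> x; rewrite /G /blowup ei.
have G_free : ~~ contains_induced (Kbip s r) G.
  apply: (blowup_induced_Kbip_free (side := mem A)) => //.
  - by move=> x y xy /perm_inj; apply: clique.
  - by move=> u v /andP [].
  - by apply: contra Hfree; apply: contains_sub_subrel => u v /andP [].
have G_le : nedges G <= ex_ind (Kbip s r) e.
  by apply: leq_ex_ind G_free => //; move=> x y /andP [].
have P2E : #|'I_k| * #|'I_k|.-1 = 'C(k, 2).*2 by rewrite card_ord -mul2n -mul_bin_diag bin1.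
rewrite P2E (narcsE es ei) (narcsE G_sym G_irr) in hpi.
rewrite (narcsE Hs Hi) leq_double in hA.
rewrite mulnC; apply: leq_trans (leq_mul hA (leqnn _)) _.
rewrite -leq_double !doubleMr (leq_trans hpi) //.
by rewrite leq_mul2l leq_double G_le orbT.
Qed.

Import GRing.Theory Num.Theory.
Local Open Scope ring_scope.

Theorem lemma1p4 (s r : nat) (hs : (2 <= s)%N) (hsr : (s <= r)%N) (hr : (2 < r)%N)
  (T : finType) (e : rel T) (He : simple_graph e) :
  let k := chromatic (compl_graph e) in
  (ex_ind (Kbip s r) e)%:R >=
    (1 / 2 : rat) * (nedges e)%:R * (ex_num k (Kbip s r))%:R / ('C(k, 2))%:R.
Proof.
cbv zeta; set k := chromatic (compl_graph e).
have [k_le1|k_gt1] := leqP k 1; first by rewrite bin_small // invr0 mulr0.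
have C_gt0 : (0 < 'C(k, 2))%N by rewrite bin_gt0.
have compl_irr : irreflexive (compl_graph e) by move=> x; rewrite /compl_graph eqxx.
have := nedges_mul_ex_num_le hs hr He (colorable_chromatic compl_irr).
rewrite -(ler_nat rat) -mul2n !natrM => bound.
rewrite ler_pdivrMr ?ltr0n //.
rewrite -/k in bound; nra.
Qed.
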